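(* Let $b_1,b_2,b_3\in\mathbb R$, not all zero, with $b_1+b_2+b_3=0$. Set \[a_1=\tfrac1{\sqrt3}(b_3-b_2),\quad a_2=\tfrac1{\sqrt3}(b_1-b_3),\quad a_3=\tfrac1{\sqrt3}(b_2-b_1).\] Let $w_1,w_2,w_3:\mathbb R\to\mathbb C\setminus\{0\}$ be differentiable functions satisfying, for all $t$, \[\frac{dw_1}{dt}=a_1\overline{w_2w_3},\quad\frac{dw_2}{dt}=a_2\overline{w_3w_1},\quad\frac{dw_3}{dt}=a_3\overline{w_1w_2},\] \[|w_1|^2+|w_2|^2+|w_3|^2=3,\qquad b_1|w_1|^2+b_2|w_2|^2+b_3|w_3|^2=0.\] Define $\Phi:\mathbb R^2\to\mathcal S^5$ by \[\Phi(s,t)=\tfrac1{\sqrt3}\bigl(e^{ib_1s}w_1(t),e^{ib_2s}w_2(t),e^{ib_3s}w_3(t)\bigr).\] Then $\Phi$ is a conformal harmonic map.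
   Context: $\mathcal S^5$ is the unit sphere in $\mathbb C^3$ with the round metric. Conformal means that $\partial\Phi/\partial s$ and $\partial\Phi/\partial t$ are orthogonal and of equal length at every point. *)

From Stdlib Require Import Reals.
From Coquelicot Require Import Coquelicot.
Open Scope R_scope.

Definition cinner (u v : C) : R := fst u * fst v + snd u * snd v.

(* A map R^2 -> C^3 is given by its three components F1 F2 F3 : R -> R -> C. *)
Definition inner3 (u1 u2 u3 v1 v2 v3 : C) : R :=
  cinner u1 v1 + cinner u2 v2 + cinner u3 v3.

Definition maps_into_S5 (F1 F2 F3 : R -> R -> C) : Prop :=
  forall s t, Cmod (F1 s t) ^ 2 + Cmod (F2 s t) ^ 2 + Cmod (F3 s t) ^ 2 = 1.

Definition has_partials (F Fs Ft : R -> R -> C) : Prop :=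
  forall s t, is_derive (fun s' => F s' t) s (Fs s t) /\
              is_derive (fun t' => F s t') t (Ft s t).

Definition conformal_map (F1 F2 F3 : R -> R -> C) : Prop :=
  exists F1s F1t F2s F2t F3s F3t : R -> R -> C,
    has_partials F1 F1s F1t /\ has_partials F2 F2s F2t /\
    has_partials F3 F3s F3t /\
    forall s t,
      inner3 (F1s s t) (F2s s t) (F3s s t) (F1t s t) (F2t s t) (F3t s t) = 0 /\
      inner3 (F1s s t) (F2s s t) (F3s s t) (F1s s t) (F2s s t) (F3s s t) =
      inner3 (F1t s t) (F2t s t) (F3t s t) (F1t s t) (F2t s t) (F3t s t).

Definition has_second_partials (F Fss Ftt : R -> R -> C) : Prop :=
  exists Fs Ft : R -> R -> C, has_partials F Fs Ft /\
    forall s t, is_derive (fun s' => Fs s' t) s (Fss s t) /\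
                is_derive (fun t' => Ft s t') t (Ftt s t).

(* Harmonic map from flat R^2 into the round S^5 ⊂ R^6: the tension field,
   i.e. the tangential part of the Euclidean Laplacian  L = Phi_ss + Phi_tt,
   vanishes:  L - <L, Phi> Phi = 0. *)
Definition harmonic_map_S5 (F1 F2 F3 : R -> R -> C) : Prop :=
  maps_into_S5 F1 F2 F3 /\
  exists F1ss F1tt F2ss F2tt F3ss F3tt : R -> R -> C,
    has_second_partials F1 F1ss F1tt /\ has_second_partials F2 F2ss F2tt /\
    has_second_partials F3 F3ss F3tt /\
    forall s t,
      let L1 := Cplus (F1ss s t) (F1tt s t) in
      let L2 := Cplus (F2ss s t) (F2tt s t) in
      let L3 := Cplus (F3ss s t) (F3tt s t) in
      let k := inner3 L1 L2 L3 (F1 s t) (F2 s t) (F3 s t) in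
      Cminus L1 (Cmult (RtoC k) (F1 s t)) = RtoC 0 /\
      Cminus L2 (Cmult (RtoC k) (F2 s t)) = RtoC 0 /\
      Cminus L3 (Cmult (RtoC k) (F3 s t)) = RtoC 0.

Definition cexp_i (x : R) : C := (cos x, sin x).
Definition Phi_comp (b : R) (w : R -> C) : R -> R -> C :=
  fun s t => Cmult (RtoC (/ sqrt 3)) (Cmult (cexp_i (b * s)) (w t)).

From Stdlib Require Import Reals Lra.
From Coquelicot Require Import Coquelicot.
Open Scope R_scope.

(* The partials are [d_s Phi_k = i b_k Phi_k] and [d_t Phi_k = e^{i b_k s} w_k' / sqrt 3].
   Their inner product is [-(sum_k a_k b_k) Im (w1 w2 w3) / 3] and [sum_k a_k b_k = 0]; their
   squared lengths agree by Lagrange's identity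
   [sum_{l<m} (b_l - b_m)^2 x_l x_m = (sum x)(sum b^2 x) - (sum b x)^2], with [x_k = |w_k|^2],
   and the two constraints.  Differentiating the system once more gives [w_k'' = mu_k w_k]
   with [mu_k] real, so [Delta Phi_k = (mu_k - b_k^2) Phi_k], and the constraints force
   [mu_k - b_k^2 = -(2/3) sum_j b_j^2 x_j] for every k.  A map into the sphere whose
   Laplacian is a pointwise multiple of itself has vanishing tension field. *)

Ltac Cring := apply injective_projections; simpl; ring.

Lemma is_derive_C (f : R -> C) x (l : C) :
  is_derive (fun y => fst (f y)) x (fst l) ->
  is_derive (fun y => snd (f y)) x (snd l) ->
  is_derive f x l.
Proof.
intros H1 H2; unfold is_derive in *.
apply (filterdiff_ext_lin _ (fun y : R => (scal y (fst l), scal y (snd l)))).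
2: { intros y; destruct l; reflexivity. }
apply (filterdiff_ext (fun y => (fst (f y), snd (f y)))).
{ intros y; destruct (f y); reflexivity. }
apply (filterdiff_comp_2 _ _ (fun a b => (a, b)) _ _ (fun a b => (a, b)) H1 H2).
apply filterdiff_linear, is_linear_prod; [apply is_linear_fst | apply is_linear_snd].
Qed.

Lemma is_derive_C_fst (f : R -> C) x (l : C) :
  is_derive f x l -> is_derive (fun y => fst (f y)) x (fst l).
Proof.
intros H; unfold is_derive in *.
apply (filterdiff_ext_lin _ (fun y : R => fst (scal y l))).
2: { intros y; destruct l; reflexivity. }
apply (filterdiff_comp f (fun c : C => fst c) _ _ H).
apply filterdiff_linear, (@is_linear_fst R_AbsRing R_NormedModule R_NormedModule).
Qed.

Lemma is_derive_C_snd (f : R -> C) x (l : C) :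
  is_derive f x l -> is_derive (fun y => snd (f y)) x (snd l).
Proof.
intros H; unfold is_derive in *.
apply (filterdiff_ext_lin _ (fun y : R => snd (scal y l))).
2: { intros y; destruct l; reflexivity. }
apply (filterdiff_comp f (fun c : C => snd c) _ _ H).
apply filterdiff_linear, (@is_linear_snd R_AbsRing R_NormedModule R_NormedModule).
Qed.

Lemma is_derive_eq_val {V : NormedModule R_AbsRing} (f : R -> V) x l l' :
  is_derive f x l -> l = l' -> is_derive f x l'.
Proof. now intros H <-. Qed.

Lemma is_derive_Cmult (f g : R -> C) x df dg :
  is_derive f x df -> is_derive g x dg ->
  is_derive (fun y => Cmult (f y) (g y)) x (Cplus (Cmult df (g x)) (Cmult (f x) dg)).
Proof.
intros Hf Hg.
apply is_derive_C_fst in Hf as Hf1; apply is_derive_C_snd in Hf as Hf2.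
apply is_derive_C_fst in Hg as Hg1; apply is_derive_C_snd in Hg as Hg2.
apply is_derive_C; simpl.
- change (is_derive (fun y => minus (fst (f y) * fst (g y)) (snd (f y) * snd (g y))) x
    (fst df * fst (g x) - snd df * snd (g x) + (fst (f x) * fst dg - snd (f x) * snd dg))).
  eapply is_derive_eq_val; [apply (is_derive_minus (V := R_NormedModule));
    apply (is_derive_mult (K := R_AbsRing)); eauto; intros; apply Rmult_comm |].
  unfold minus, plus, opp, mult; simpl; ring.
- change (is_derive (fun y => plus (fst (f y) * snd (g y)) (snd (f y) * fst (g y))) x
    (fst df * snd (g x) + snd df * fst (g x) + (fst (f x) * snd dg + snd (f x) * fst dg))).
  eapply is_derive_eq_val; [apply (is_derive_plus (V := R_NormedModule));
    apply (is_derive_mult (K := R_AbsRing)); eauto; intros; apply Rmult_comm |].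
  unfold plus, mult; simpl; ring.
Qed.

Lemma is_derive_Cconst (c : C) x : is_derive (fun _ : R => c) x (RtoC 0).
Proof. apply is_derive_C; simpl; apply (is_derive_const (V := R_NormedModule)). Qed.

Lemma is_derive_Cscal_l (c : C) (f : R -> C) x df :
  is_derive f x df -> is_derive (fun y => Cmult c (f y)) x (Cmult c df).
Proof.
intros Hf; eapply is_derive_eq_val.
- apply (is_derive_Cmult (fun _ => c) f); eauto using is_derive_Cconst.
- Cring.
Qed.

Lemma is_derive_Cscal_r (c : C) (f : R -> C) x df :
  is_derive f x df -> is_derive (fun y => Cmult (f y) c) x (Cmult df c).
Proof.
intros Hf; eapply is_derive_eq_val.
- apply (is_derive_Cmult f (fun _ => c)); eauto using is_derive_Cconst.
- Cring.
Qed.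

Lemma is_derive_Cconj (f : R -> C) x df :
  is_derive f x df -> is_derive (fun y => Cconj (f y)) x (Cconj df).
Proof.
intros Hf; apply is_derive_C; [exact (is_derive_C_fst _ _ _ Hf) |].
apply (is_derive_opp (V := R_NormedModule)), is_derive_C_snd, Hf.
Qed.

Lemma is_derive_cexp_i (b s : R) :
  is_derive (fun s => cexp_i (b * s)) s (Cmult (0, b) (cexp_i (b * s))).
Proof. apply is_derive_C; simpl; auto_derive; auto; ring. Qed.

Lemma inv_sqrt3_sqr : / sqrt 3 * / sqrt 3 = / 3.
Proof. rewrite <- Rinv_mult, sqrt_sqrt; lra. Qed.

Lemma cinner_diag (u : C) : cinner u u = Cmod u ^ 2.
Proof. rewrite Cmod2_alt; unfold cinner, Re, Im; ring. Qed.

Lemma is_derive_Phi_comp_s (b : R) (w : R -> C) s t :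
  is_derive (fun s => Phi_comp b w s t) s (Phi_comp b (fun t => Cmult (0, b) (w t)) s t).
Proof.
eapply is_derive_eq_val; [apply is_derive_Cscal_l, is_derive_Cscal_r, is_derive_cexp_i |].
unfold Phi_comp; Cring.
Qed.

Lemma is_derive_Phi_comp_t (b : R) (w w' : R -> C) s t :
  is_derive w t (w' t) -> is_derive (fun t => Phi_comp b w s t) t (Phi_comp b w' s t).
Proof. intros Hw; apply is_derive_Cscal_l, is_derive_Cscal_l, Hw. Qed.

Lemma Phi_comp_partials (b : R) (w w' : R -> C) :
  (forall t, is_derive w t (w' t)) ->
  has_partials (Phi_comp b w) (Phi_comp b (fun t => Cmult (0, b) (w t))) (Phi_comp b w').
Proof. intros Hw s t; split; [apply is_derive_Phi_comp_s | apply is_derive_Phi_comp_t, Hw]. Qed.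

Lemma Phi_comp_second_partials (b : R) (w w' w'' : R -> C) :
  (forall t, is_derive w t (w' t)) -> (forall t, is_derive w' t (w'' t)) ->
  has_second_partials (Phi_comp b w)
    (Phi_comp b (fun t => Cmult (0, b) (Cmult (0, b) (w t)))) (Phi_comp b w'').
Proof.
intros Hw Hw'; exists (Phi_comp b (fun t => Cmult (0, b) (w t))), (Phi_comp b w').
split; [now apply Phi_comp_partials |].
intros s t; split; [apply is_derive_Phi_comp_s | apply is_derive_Phi_comp_t, Hw'].
Qed.

Lemma Phi_comp_laplacian (b : R) (mu : R -> R) (w : R -> C) s t :
  Cplus (Phi_comp b (fun t => Cmult (0, b) (Cmult (0, b) (w t))) s t)
        (Phi_comp b (fun t => Cmult (RtoC (mu t)) (w t)) s t)
  = Cmult (RtoC (- b ^ 2 + mu t)) (Phi_comp b w s t).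
Proof. unfold Phi_comp; Cring. Qed.

Lemma cinner_Phi_comp (b : R) (u v : R -> C) s t :
  cinner (Phi_comp b u s t) (Phi_comp b v s t) = / 3 * cinner (u t) (v t).
Proof.
pose proof (sin2_cos2 (b * s)) as Hrot; unfold Rsqr in Hrot.
unfold Phi_comp, cinner, cexp_i, RtoC; destruct (u t) as [u1 u2], (v t) as [v1 v2]; simpl.
transitivity (/ sqrt 3 * / sqrt 3 * (sin (b * s) * sin (b * s) + cos (b * s) * cos (b * s))
  * (u1 * v1 + u2 * v2)); [ring |].
rewrite inv_sqrt3_sqr, Hrot; ring.
Qed.

Lemma inner3_Phi_comp (b1 b2 b3 : R) (u1 u2 u3 v1 v2 v3 : R -> C) s t :
  inner3 (Phi_comp b1 u1 s t) (Phi_comp b2 u2 s t) (Phi_comp b3 u3 s t)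
         (Phi_comp b1 v1 s t) (Phi_comp b2 v2 s t) (Phi_comp b3 v3 s t)
  = / 3 * inner3 (u1 t) (u2 t) (u3 t) (v1 t) (v2 t) (v3 t).
Proof. unfold inner3; rewrite !cinner_Phi_comp; ring. Qed.

Lemma maps_into_S5_Phi_comp (b1 b2 b3 : R) (w1 w2 w3 : R -> C) :
  (forall t, Cmod (w1 t) ^ 2 + Cmod (w2 t) ^ 2 + Cmod (w3 t) ^ 2 = 3) ->
  maps_into_S5 (Phi_comp b1 w1) (Phi_comp b2 w2) (Phi_comp b3 w3).
Proof.
intros Hnorm s t; rewrite <- !cinner_diag, !cinner_Phi_comp, !cinner_diag, <- !Rmult_plus_distr_l.
rewrite Hnorm; field.
Qed.

Lemma harmonic_map_S5_of_normal_laplacian (F1 F2 F3 F1ss F1tt F2ss F2tt F3ss F3tt : R -> R -> C)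
    (lam : R -> R -> R) :
  maps_into_S5 F1 F2 F3 ->
  has_second_partials F1 F1ss F1tt -> has_second_partials F2 F2ss F2tt ->
  has_second_partials F3 F3ss F3tt ->
  (forall s t, Cplus (F1ss s t) (F1tt s t) = Cmult (RtoC (lam s t)) (F1 s t)) ->
  (forall s t, Cplus (F2ss s t) (F2tt s t) = Cmult (RtoC (lam s t)) (F2 s t)) ->
  (forall s t, Cplus (F3ss s t) (F3tt s t) = Cmult (RtoC (lam s t)) (F3 s t)) ->
  harmonic_map_S5 F1 F2 F3.
Proof.
intros HS5 H1 H2 H3 L1 L2 L3; split; [exact HS5 |].
exists F1ss, F1tt, F2ss, F2tt, F3ss, F3tt; do 3 (split; [assumption |]).
intros s t; cbv zeta; rewrite L1, L2, L3.
assert (Hk : inner3 (Cmult (RtoC (lam s t)) (F1 s t)) (Cmult (RtoC (lam s t)) (F2 s t))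
               (Cmult (RtoC (lam s t)) (F3 s t)) (F1 s t) (F2 s t) (F3 s t) = lam s t).
{ specialize (HS5 s t); rewrite <- !cinner_diag in HS5.
  transitivity (lam s t * (cinner (F1 s t) (F1 s t) + cinner (F2 s t) (F2 s t)
                           + cinner (F3 s t) (F3 s t))).
  - unfold inner3, cinner; simpl; ring.
  - rewrite HS5; ring. }
rewrite Hk; repeat split; Cring.
Qed.

Lemma cyclic_rhs_orthogonal (a1 a2 a3 b1 b2 b3 : R) (u1 u2 u3 : C) :
  a1 * b1 + a2 * b2 + a3 * b3 = 0 ->
  inner3 (Cmult (0, b1) u1) (Cmult (0, b2) u2) (Cmult (0, b3) u3)
         (Cmult (RtoC a1) (Cconj (Cmult u2 u3))) (Cmult (RtoC a2) (Cconj (Cmult u3 u1)))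
         (Cmult (RtoC a3) (Cconj (Cmult u1 u2))) = 0.
Proof.
intros Hab.
transitivity (- (a1 * b1 + a2 * b2 + a3 * b3) * Im (Cmult (Cmult u1 u2) u3)).
- destruct u1, u2, u3; unfold inner3, cinner, Im; simpl; ring.
- rewrite Hab; ring.
Qed.

Lemma cyclic_rhs_equal_speed (b1 b2 b3 : R) (u1 u2 u3 : C) :
  Cmod u1 ^ 2 + Cmod u2 ^ 2 + Cmod u3 ^ 2 = 3 ->
  b1 * Cmod u1 ^ 2 + b2 * Cmod u2 ^ 2 + b3 * Cmod u3 ^ 2 = 0 ->
  let v1 := Cmult (RtoC (/ sqrt 3 * (b3 - b2))) (Cconj (Cmult u2 u3)) in
  let v2 := Cmult (RtoC (/ sqrt 3 * (b1 - b3))) (Cconj (Cmult u3 u1)) in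
  let v3 := Cmult (RtoC (/ sqrt 3 * (b2 - b1))) (Cconj (Cmult u1 u2)) in
  inner3 (Cmult (0, b1) u1) (Cmult (0, b2) u2) (Cmult (0, b3) u3)
         (Cmult (0, b1) u1) (Cmult (0, b2) u2) (Cmult (0, b3) u3)
  = inner3 v1 v2 v3 v1 v2 v3.
Proof.
intros Hnorm Hmom v1 v2 v3.
rewrite <- !cinner_diag in Hnorm, Hmom.
set (x1 := cinner u1 u1) in *; set (x2 := cinner u2 u2) in *; set (x3 := cinner u3 u3) in *.
transitivity (b1 ^ 2 * x1 + b2 ^ 2 * x2 + b3 ^ 2 * x3).
{ unfold x1, x2, x3, inner3, cinner; simpl; ring. }
transitivity (/ 3 * ((b3 - b2) ^ 2 * x2 * x3 + (b1 - b3) ^ 2 * x3 * x1 + (b2 - b1) ^ 2 * x1 * x2)).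
2: { rewrite <- inv_sqrt3_sqr; unfold v1, v2, v3, x1, x2, x3, inner3, cinner; simpl; ring. }
assert (Lagrange : (b3 - b2) ^ 2 * x2 * x3 + (b1 - b3) ^ 2 * x3 * x1 + (b2 - b1) ^ 2 * x1 * x2
  = (x1 + x2 + x3) * (b1 ^ 2 * x1 + b2 ^ 2 * x2 + b3 ^ 2 * x3) - (b1 * x1 + b2 * x2 + b3 * x3) ^ 2)
  by ring.
rewrite Lagrange, Hnorm, Hmom; field.
Qed.

Lemma is_derive_cyclic_rhs (ak al am : R) (wk wl wm : R -> C) t :
  is_derive wl t (Cmult (RtoC al) (Cconj (Cmult (wm t) (wk t)))) ->
  is_derive wm t (Cmult (RtoC am) (Cconj (Cmult (wk t) (wl t)))) ->
  is_derive (fun t => Cmult (RtoC ak) (Cconj (Cmult (wl t) (wm t)))) t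
    (Cmult (RtoC (ak * (al * Cmod (wm t) ^ 2 + am * Cmod (wl t) ^ 2))) (wk t)).
Proof.
intros Hl Hm; eapply is_derive_eq_val.
- apply is_derive_Cscal_l, is_derive_Cconj, is_derive_Cmult; eassumption.
- rewrite !Cmod2_alt; unfold Re, Im; Cring.
Qed.

Lemma cyclic_eigenvalue (b1 b2 b3 x1 x2 x3 : R) :
  b1 + b2 + b3 = 0 -> x1 + x2 + x3 = 3 -> b1 * x1 + b2 * x2 + b3 * x3 = 0 ->
  - b1 ^ 2 + / sqrt 3 * (b3 - b2) * (/ sqrt 3 * (b1 - b3) * x3 + / sqrt 3 * (b2 - b1) * x2)
  = - (2 / 3) * (b1 ^ 2 * x1 + b2 ^ 2 * x2 + b3 ^ 2 * x3).
Proof.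
intros Hb Hnorm Hmom.
transitivity (- b1 ^ 2 + / 3 * (b3 - b2) * ((b1 - b3) * x3 + (b2 - b1) * x2));
  [rewrite <- inv_sqrt3_sqr; ring |].
apply Rminus_diag_uniq.
transitivity (/ 3 * ((b1 + b2 + b3) * (b2 * x2 + b3 * x3 - b1 * (x2 + x3))
  + b1 ^ 2 * (x1 + x2 + x3 - 3) + b1 * (b1 * x1 + b2 * x2 + b3 * x3))); [field |].
rewrite Hb, Hnorm, Hmom; ring.
Qed.

Theorem proposition8p3 (b1 b2 b3 : R) (w1 w2 w3 : R -> C) :
  ~ (b1 = 0 /\ b2 = 0 /\ b3 = 0) ->
  b1 + b2 + b3 = 0 ->
  (forall t, w1 t <> RtoC 0) ->
  (forall t, w2 t <> RtoC 0) ->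
  (forall t, w3 t <> RtoC 0) ->
  (forall t, is_derive w1 t
     (Cmult (RtoC (/ sqrt 3 * (b3 - b2))) (Cconj (Cmult (w2 t) (w3 t))))) ->
  (forall t, is_derive w2 t
     (Cmult (RtoC (/ sqrt 3 * (b1 - b3))) (Cconj (Cmult (w3 t) (w1 t))))) ->
  (forall t, is_derive w3 t
     (Cmult (RtoC (/ sqrt 3 * (b2 - b1))) (Cconj (Cmult (w1 t) (w2 t))))) ->
  (forall t, Cmod (w1 t) ^ 2 + Cmod (w2 t) ^ 2 + Cmod (w3 t) ^ 2 = 3) ->
  (forall t, b1 * Cmod (w1 t) ^ 2 + b2 * Cmod (w2 t) ^ 2 + b3 * Cmod (w3 t) ^ 2 = 0) ->
  conformal_map (Phi_comp b1 w1) (Phi_comp b2 w2) (Phi_comp b3 w3) /\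
  harmonic_map_S5 (Phi_comp b1 w1) (Phi_comp b2 w2) (Phi_comp b3 w3).
Proof.
intros _ Hb _ _ _ D1 D2 D3 Hnorm Hmom; split.
- do 6 eexists; split; [apply Phi_comp_partials, D1 |].
  split; [apply Phi_comp_partials, D2 |]; split; [apply Phi_comp_partials, D3 |].
  intros s t; rewrite !inner3_Phi_comp; cbv beta; split.
  + rewrite cyclic_rhs_orthogonal; ring.
  + now rewrite cyclic_rhs_equal_speed.
- eapply (harmonic_map_S5_of_normal_laplacian _ _ _ _ _ _ _ _ _
    (fun s t => - (2 / 3) * (b1 ^ 2 * Cmod (w1 t) ^ 2 + b2 ^ 2 * Cmod (w2 t) ^ 2
                             + b3 ^ 2 * Cmod (w3 t) ^ 2))).
  + now apply maps_into_S5_Phi_comp.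
  + exact (Phi_comp_second_partials _ _ _ _ D1
             (fun t => is_derive_cyclic_rhs _ _ _ _ _ _ t (D2 t) (D3 t))).
  + exact (Phi_comp_second_partials _ _ _ _ D2
             (fun t => is_derive_cyclic_rhs _ _ _ _ _ _ t (D3 t) (D1 t))).
  + exact (Phi_comp_second_partials _ _ _ _ D3
             (fun t => is_derive_cyclic_rhs _ _ _ _ _ _ t (D1 t) (D2 t))).
  + intros s t; rewrite Phi_comp_laplacian; cbv beta.
    rewrite (cyclic_eigenvalue b1 b2 b3 (Cmod (w1 t) ^ 2));
      [do 2 f_equal | | specialize (Hnorm t) | specialize (Hmom t)]; lra.
  + intros s t; rewrite Phi_comp_laplacian; cbv beta.
    rewrite (cyclic_eigenvalue b2 b3 b1 (Cmod (w2 t) ^ 2));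
      [do 2 f_equal | | specialize (Hnorm t) | specialize (Hmom t)]; lra.
  + intros s t; rewrite Phi_comp_laplacian; cbv beta.
    rewrite (cyclic_eigenvalue b3 b1 b2 (Cmod (w3 t) ^ 2));
      [do 2 f_equal | | specialize (Hnorm t) | specialize (Hmom t)]; lra.
Qed.
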